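(* Suppose $w$ induces the triangulation $Z$ and let $a>0$ be a constant as in the following fact: for all sufficiently small $\delta$ and all $x\in P_\Sigma$, $\{m\in A:\rho_m(x)>\delta^a\}$ is the vertex set of a simplex of $Z$. Then for all sufficiently small $\delta>0$ and every $\epsilon$ with $\delta^a\le\epsilon<1/|\Delta|$, $$P_\Sigma=\bigcup_{S\in Z}U^S_\epsilon .$$
   Context: Let $M\cong\mathbb{Z}^2$, $\Delta\subset M_{\mathbb{R}}$ a 2-dimensional lattice polygon, $A=\Delta\cap M$, $|\Delta|$ the number of points of $A$, $P_\Sigma$ the projective toric surface of the normal fan of $\Delta$ with torus $(\mathbb{C}^* )^2$, $s_m(x)=x^m$. For $w\in\mathbb{Z}^A$, $\delta\in(0,1)$: $\rho_m=\delta^{2w_m}|s_m|^2/\sum_{m'\in A}\delta^{2w_{m'}}|s_{m'}|^2$, $\rho_S=\sum_{m\in S}\rho_m$. We say $w$ induces the triangulation $Z$ if $Z$ is a triangulation of $\Delta$ with vertex set $A$, triangles containing no other lattice points, such that for every simplex $\sigma$ of $Z$ there is an affine $\ell_\sigma$ with $w_m=\ell_\sigma(m)$ on vertices of $\sigma$ and $w_m>\ell_\sigma(m)$ for other $m\in A$; simplices (of all dimensions) are identified with their vertex sets $S$. For $S\in Z$: $U^S_\epsilon=\{x\in P_\Sigma:\rho_S(x)>1-|\Delta|\epsilon,\ \rho_m(x)>\epsilon\ \text{for all } m\in S\}$. *)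

From HB Require Import structures.
From mathcomp Require Import all_boot all_order all_algebra.
From mathcomp Require Import reals exp.
From mathcomp Require Import complex.

Set Implicit Arguments.
Unset Strict Implicit.
Unset Printing Implicit Defensive.

Import Order.TTheory GRing.Theory Num.Theory.
Local Open Scope ring_scope.

(* Lattice M = Z^2; the lattice points A = Delta ∩ M of the polygon are
   enumerated injectively by p : 'I_N -> int * int, so N = |Delta|.
   Subsets of A (simplices) are sets {set 'I_N}. *)

Section Defs.
Variable R : realType.
Variable N : nat.

Definition latR (q : int * int) : R * R := (q.1%:~R, q.2%:~R).

Definition in_conv (pts : 'I_N -> R * R) (S : {set 'I_N}) (y : R * R) : Prop :=
  exists lam : 'I_N -> R,
    [/\ forall i, 0 <= lam i,
        forall i, i \notin S -> lam i = 0,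
        \sum_i lam i = 1,
        \sum_i lam i * (pts i).1 = y.1 &
        \sum_i lam i * (pts i).2 = y.2].

Definition aff_indep (pts : 'I_N -> R * R) (S : {set 'I_N}) : Prop :=
  forall lam : 'I_N -> R,
    \sum_(i in S) lam i = 0 ->
    \sum_(i in S) lam i * (pts i).1 = 0 ->
    \sum_(i in S) lam i * (pts i).2 = 0 ->
    forall i, i \in S -> lam i = 0.

Definition lattice_polygon_points (p : 'I_N -> int * int) : Prop :=
  [/\ injective p,
      (forall q : int * int, in_conv (latR \o p) [set: 'I_N] (latR q) ->
        exists i, p i = q) &
      exists i j k : 'I_N, aff_indep (latR \o p) [set i; j; k] ].

Definition triangulation (p : 'I_N -> int * int) (Z : {set {set 'I_N}}) : Prop :=
  let pts := latR \o p in
  [/\ (forall S, S \in Z -> S != set0 /\ aff_indep pts S),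
      (forall S T : {set 'I_N}, S \in Z -> T \subset S -> T != set0 -> T \in Z),
      (forall S T : {set 'I_N}, S \in Z -> T \in Z -> forall y,
        in_conv pts S y -> in_conv pts T y -> in_conv pts (S :&: T) y) &
      ((forall y, in_conv pts [set: 'I_N] y -> exists2 S, S \in Z & in_conv pts S y) /\
      (forall i, [set i] \in Z) /\
      forall S, S \in Z -> forall q : int * int, in_conv pts S (latR q) ->
        exists i : 'I_N, i \in S /\ p i = q) ].

Definition induces (p : 'I_N -> int * int) (w : 'I_N -> int)
    (Z : {set {set 'I_N}}) : Prop :=
  triangulation p Z /\
  forall S, S \in Z -> exists c0 c1 c2 : R,
    let l := fun i => c0 + c1 * (latR (p i)).1 + c2 * (latR (p i)).2 in
    (forall i, i \in S -> (w i)%:~R = l i) /\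
    (forall i, i \notin S -> (w i)%:~R > l i).

Definition absq (z : R[i]) : R := complex.Re z ^+ 2 + complex.Im z ^+ 2.

(* P_Sigma, realised (via the sections s_m, m in A) as the closure of the
   torus orbit in P^{N-1}; a point is a nonzero homogeneous coordinate
   vector z in the closure of the cone over { (x^m)_{m in A} : x in (C^* )^2 }. *)
Definition in_PSigma (p : 'I_N -> int * int) (z : 'I_N -> R[i]) : Prop :=
  (exists i, z i != 0) /\
  forall e : R, 0 < e -> exists lam x1 x2 : R[i],
    [/\ lam != 0, x1 != 0, x2 != 0 &
      forall i, absq (z i - lam * x1 ^ (p i).1 * x2 ^ (p i).2) < e].

Definition rho (w : 'I_N -> int) (delta : R) (z : 'I_N -> R[i]) (i : 'I_N) : R :=
  delta ^ (2 * w i) * absq (z i) /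
  \sum_j delta ^ (2 * w j) * absq (z j).

Definition rhoS (w : 'I_N -> int) (delta : R) (z : 'I_N -> R[i]) (S : {set 'I_N}) : R :=
  \sum_(i in S) rho w delta z i.

Definition in_U (w : 'I_N -> int) (delta eps : R) (S : {set 'I_N}) (z : 'I_N -> R[i]) : Prop :=
  rhoS w delta z S > 1 - N%:R * eps /\ forall i, i \in S -> rho w delta z i > eps.

End Defs.

From HB Require Import structures.
From mathcomp Require Import all_boot all_order all_algebra.
From mathcomp Require Import reals exp.
From mathcomp Require Import complex.

Set Implicit Arguments.
Unset Strict Implicit.
Unset Printing Implicit Defensive.

Import Order.TTheory GRing.Theory Num.Theory.
Local Open Scope ring_scope.

(* The weights rho_m form a probability vector on A.  For eps with
   N eps < 1 the set S of weights exceeding eps is nonempty, and the weights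
   outside S add up to at most |A \ S| eps < N eps, so rho_S > 1 - N eps.
   Since eps >= delta^a, S is a face of the simplex {m | rho_m > delta^a}
   of Z, hence itself a simplex of Z, and x lies in U^S_eps. *)

Section ProbabilityVector.
Variables (R : realFieldType) (N : nat) (r : 'I_N -> R) (eps : R).
Hypotheses (r_sum1 : \sum_i r i = 1) (Neps_lt1 : N%:R * eps < 1).

Lemma exists_gt_threshold : exists i, eps < r i.
Proof.
apply/existsP; apply: contraLR Neps_lt1 => /existsPn r_le; rewrite -leNgt.
have -> : N%:R * eps = \sum_(i < N) eps by rewrite sumr_const card_ord mulr_natl.
rewrite -r_sum1.
by apply: ler_sum => i _; rewrite leNgt r_le.
Qed.

Lemma mass_gt_threshold (eps_gt0 : 0 < eps) :
  1 - N%:R * eps < \sum_(i in [set i | eps < r i]) r i.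
Proof.
set S := [set i | eps < r i].
have [i0 i0S] : exists i0, i0 \in S by have [i ?] := exists_gt_threshold; exists i; rewrite inE.
have split_sum : \sum_(i in S) r i = 1 - \sum_(i in ~: S) r i.
  rewrite -r_sum1 [X in _ = X - _](bigID (mem S)) /=.
  by under [X in _ = _ + X - _]eq_bigl do rewrite -in_setC; rewrite addrK.
have out_le : \sum_(i in ~: S) r i <= #|~: S|%:R * eps.
  by rewrite mulr_natl -sumr_const; apply: ler_sum => i; rewrite !inE leNgt.
have card_lt : (#|~: S| < N)%N.
  have S_gt0 : (0 < #|S|)%N by rewrite card_gt0; apply/set0Pn; exists i0.
  apply: (@leq_trans (#|S| + #|~: S|)); last by rewrite cardsC card_ord.
  by rewrite -{1}[#|~: S|]add0n ltn_add2r.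
by rewrite split_sum ltrD2l ltrN2 (le_lt_trans out_le) // ltr_pM2r // ltr_nat.
Qed.

End ProbabilityVector.

Lemma absq_ge0 (R : realType) (z : R[i]) : 0 <= absq z.
Proof. by rewrite /absq addr_ge0 // sqr_ge0. Qed.

Lemma absq_gt0 (R : realType) (z : R[i]) : z != 0 -> 0 < absq z.
Proof.
case: z => x y; apply: contraNT; rewrite -leNgt /absq /= => abs_le0.
have /andP[] : (x ^+ 2 == 0) && (y ^+ 2 == 0).
  by rewrite -paddr_eq0 ?sqr_ge0 // eq_le abs_le0 addr_ge0 ?sqr_ge0.
by rewrite !sqrf_eq0 => /eqP -> /eqP ->.
Qed.

Lemma sum_rho (R : realType) (N : nat) (w : 'I_N -> int) (delta : R)
    (z : 'I_N -> R[i]) :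
  0 < delta -> (exists i, z i != 0) -> \sum_i rho w delta z i = 1.
Proof.
move=> delta_gt0 [i0 zi0]; rewrite -mulr_suml divff // gt_eqF //.
rewrite (bigD1 i0) //= ltr_pwDl ?mulr_gt0 ?absq_gt0 ?exprz_gt0 //.
by apply: sumr_ge0 => j _; rewrite mulr_ge0 ?absq_ge0 // ltW // exprz_gt0.
Qed.

Theorem proposition3p3 (R : realType) (N : nat) (p : 'I_N -> int * int)
    (w : 'I_N -> int) (Z : {set {set 'I_N}}) (a : R) :
  lattice_polygon_points R p ->
  induces R p w Z ->
  0 < a ->
  (exists2 d0 : R, 0 < d0 & forall delta : R, 0 < delta -> delta < d0 ->
     forall z : 'I_N -> R[i], in_PSigma p z ->
       [set i | rho w delta z i > delta `^ a] \in Z) ->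
  exists2 d0 : R, 0 < d0 & forall delta : R, 0 < delta -> delta < d0 ->
    forall eps : R, delta `^ a <= eps -> eps < N%:R^-1 ->
    forall z : 'I_N -> R[i], in_PSigma p z ->
      exists2 S, S \in Z & in_U w delta eps S z.
Proof.
move=> _ [[_ Z_faces _ _] _] _ [d0 d0_gt0 Z_big_weights].
exists d0 => // delta delta_gt0 delta_lt eps delta_a_le eps_lt z zP.
have eps_gt0 : 0 < eps by apply: lt_le_trans delta_a_le; apply: powR_gt0.
have [[i0 zi0] _] := zP.
have N_gt0 : (0 : R) < N%:R by rewrite ltr0n; apply: leq_ltn_trans (ltn_ord i0).
have Neps_lt1 : N%:R * eps < 1 by rewrite mulrC -ltr_pdivlMr // mul1r.
have rho_sum1 : \sum_i rho w delta z i = 1 by apply: sum_rho; last exists i0.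
have [i1 i1_gt] := exists_gt_threshold rho_sum1 Neps_lt1.
exists [set i | eps < rho w delta z i].
  apply: (Z_faces _ _ (Z_big_weights _ delta_gt0 delta_lt z zP)).
    by apply/subsetP => i; rewrite !inE; apply: le_lt_trans.
  by apply/set0Pn; exists i1; rewrite inE.
split; first exact: mass_gt_threshold rho_sum1 Neps_lt1 eps_gt0.
by move=> i; rewrite inE.
Qed.
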